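(* Let $G$ be a finite group and let $H,K$ be subgroups of $G$ with $\Pr(H,K)\ge\epsilon>0$. Then there exists a subset $X$ of $H$ such that, for $H_0=\langle X\rangle$: (1) $|H:H_0|\le 2/\epsilon-1$; (2) $|K:C_K(x)|\le 2/\epsilon$ for every $x\in X$; (3) $|K:C_K(x)|\le (2/\epsilon)^{6/\epsilon}$ for every $x\in H_0$.
   Context: For subsets $X,Y$ of a finite group, $\Pr(X,Y)=|\{(x,y)\in X\times Y: xy=yx\}|/(|X||Y|)$. *)

From HB Require Import structures.
From mathcomp Require Import all_boot all_order all_algebra all_fingroup.
From mathcomp Require Import reals exp.
Set Implicit Arguments. Unset Strict Implicit. Unset Printing Implicit Defensive.
Import GRing.Theory Num.Theory.
Local Open Scope ring_scope.

Definition commprob (R : realType) (gT : finGroupType) (X Y : {set gT}) : R :=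
  (#|[set p in setX X Y | (p.1 * p.2 == p.2 * p.1)%g]|)%:R / (#|X| * #|Y|)%:R.

From HB Require Import structures.
From mathcomp Require Import all_boot all_order all_algebra all_fingroup.
From mathcomp Require Import reals exp.
From mathcomp Require Import lra zify.
Import Order.TTheory GRing.Theory Num.Theory.

Set Implicit Arguments.
Unset Strict Implicit.
Unset Printing Implicit Defensive.

(* Let X be the set of x in H with |K : C_K(x)| <= 2/eps.  An x outside X has
   |C_K(x)| < eps |K| / 2, so counting commuting pairs row by row gives
   eps |H| |K| <= |H| |K| eps/2 + |X| (1 - eps/2) |K|, i.e.
   eps |H| <= (2 - eps) |X|; this bounds |H : <X>| <= |H| / |X|.
   X contains 1 and is symmetric, so its powers X^n increase, and as long as
   X^(k+1) < X^(k+2) a point u of the difference gives a translate u X inside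
   X^(k+3) that misses X^k.  Thus each x in <X> lies in some X^n with
   n |X| <= 3 |<X>| <= 3 |H|, whence n <= 6/eps; finally |K : C_K(x)| is
   submultiplicative in x, so it is at most (2/eps)^n on X^n. *)

Section CentralizerIndex.
Local Open Scope group_scope.
Variable gT : finGroupType.
Implicit Types (G A B : {group gT}) (x y : gT).

Lemma indexgI_leq G A B : A \subset G -> #|G : A :&: B| <= #|G : A| * #|G : B|.
Proof.
move=> sAG; rewrite -(Lagrange_index sAG (subsetIl A B)) leq_mul2l indexgI.
apply/orP; right; rewrite -(leq_pmul2r (cardG_gt0 B)) !LagrangeMr.
exact/subset_leq_card/mulSg.
Qed.

Lemma index_cent1M G x y : #|G : 'C_G[x * y]| <= #|G : 'C_G[x]| * #|G : 'C_G[y]|.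
Proof.
apply: (leq_trans _ (indexgI_leq 'C_G[y]%G (subsetIl G 'C[x]))).
apply/dvdn_leq/indexgS; first exact: indexg_gt0.
apply/subsetP => z /setIP[/setIP[Gz cxz] /setIP[_ cyz]].
by rewrite inE Gz cent1C groupM // -cent1C.
Qed.

Lemma cent1V x : 'C[x^-1] = 'C[x].
Proof. by apply/setP => z; rewrite cent1C groupV -cent1C. Qed.

End CentralizerIndex.

Section SetPowers.
Local Open Scope group_scope.
Variables (gT : finGroupType) (X : {set gT}).

Lemma expgs_sub_gen n : X ^+ n \subset <<X>>.
Proof.
by elim: n => [|n IH]; rewrite ?expg0 ?sub1G // expgS mul_subG ?subset_gen.
Qed.

Lemma mul_indexg_card_gen (G : {group gT}) :
  X \subset G -> #|G : <<X>>| * #|X| <= #|G|.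
Proof.
move=> sXG; have sGG : <<X>> \subset G by rewrite gen_subG.
rewrite -(Lagrange sGG) mulnC leq_mul2r.
by rewrite subset_leq_card ?subset_gen ?orbT.
Qed.

Hypotheses (X1 : 1 \in X) (XV : {in X, forall x, x^-1 \in X}).

Lemma expgs_subS n : X ^+ n \subset X ^+ n.+1.
Proof. by rewrite expgSr mulg_subl. Qed.

Lemma expgs_subset m n : m <= n -> X ^+ m \subset X ^+ n.
Proof.
move/subnK <-; elim: (n - m) => [|d IH] //.
exact: subset_trans IH (expgs_subS _).
Qed.

Lemma expgs_neqS m n : m <= n -> X ^+ n != X ^+ n.+1 -> X ^+ m != X ^+ m.+1.
Proof.
move=> le_mn; apply: contra_neq => eq_m; elim: n le_mn => [|n IH].
  by rewrite leqn0 => /eqP <-.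
rewrite leq_eqVlt => /predU1P[<- // | /IH eq_n].
by rewrite [RHS]expgSr -eq_n -expgSr.
Qed.

Lemma card_expgs_growth k :
  X ^+ k.+1 != X ^+ k.+2 -> #|X ^+ k| + #|X| <= #|X ^+ k.+3|.
Proof.
move=> neq; have /properP[_ [u uX2 uNX1]] : X ^+ k.+1 \proper X ^+ k.+2.
  by rewrite properEneq neq expgs_subS.
have disj : [disjoint X ^+ k & u *: X].
  rewrite disjoints_subset; apply/subsetP => z zXk; rewrite inE mem_lcoset.
  apply: contra uNX1 => uzX; have -> : u = z * (u^-1 * z)^-1.
    by rewrite invMg invgK mulKVg.
  by rewrite expgSr mem_mulg ?XV.
have sXk3 : X ^+ k \subset X ^+ k.+3 by apply: expgs_subset; lia.
rewrite -(card_lcoset X u) -cardsUI disjoint_setI0 // cards0 addn0.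
apply/subset_leq_card/subsetP => z /setUP[/(subsetP sXk3) -> //|].
rewrite mem_lcoset => uzX; rewrite -(mulKVg u z) [X ^+ _]expgSr.
exact: mem_mulg.
Qed.

Lemma card_expgs_mul3 j :
  X ^+ (3 * j) != X ^+ (3 * j).+1 -> j.+1 * #|X| <= #|X ^+ (3 * j).+1|.
Proof.
elim: j => [|j IH] neq; first by rewrite mul1n muln0 expg1.
have e3 : (3 * j.+1 = (3 * j).+3)%N by rewrite mulnS addnC addn3.
rewrite e3 in neq *; rewrite mulSn.
have := card_expgs_growth (expgs_neqS (leqnSn _) neq).
have := IH (expgs_neqS (leqW (leqW (leqnSn _))) neq).
lia.
Qed.

Lemma expgs_neqS_card n : X ^+ n != X ^+ n.+1 -> n.+1 * #|X| <= 3 * #|<<X>>|.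
Proof.
move=> neq; pose j := n %/ 3.
have le_3j_n : 3 * j <= n by rewrite /j; lia.
have le_n_3j : n.+1 <= 3 * j.+1 by rewrite /j; lia.
have := card_expgs_mul3 (expgs_neqS le_3j_n neq).
have := subset_leq_card (expgs_sub_gen (3 * j).+1).
nia.
Qed.

Lemma mem_gen_expgs x :
  x \in <<X>> -> exists2 n, x \in X ^+ n & n * #|X| <= 3 * #|<<X>>|.
Proof.
move=> genXx; have [m genE] := gen_expgs X; rewrite (setUidPr _) ?sub1set // in genE.
have exXn : exists n, x \in X ^+ n by exists m; rewrite -genE.
case: (ex_minnP exXn) => n xXn min_n; exists n => //.
case: n xXn min_n => [|n] xXn min_n; first by rewrite mul0n.
apply: expgs_neqS_card; apply/eqP => eq_n.
by have := min_n n; rewrite eq_n ltnn => /(_ xXn).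
Qed.

End SetPowers.

Local Open Scope ring_scope.

Lemma index_cent1_expgs (R : numDomainType) (gT : finGroupType) (G : {group gT})
    (X : {set gT}) (c : R) n x :
  {in X, forall y, #|G : 'C_G[y]|%g%:R <= c} -> x \in (X ^+ n)%g ->
  #|G : 'C_G[x]|%g%:R <= c ^+ n.
Proof.
move=> leX; elim: n x => [|n IH] x.
  by rewrite expg0 inE => /eqP ->; rewrite cent11T setIT indexgg.
rewrite expgS => /mulsgP[y w yX wXn ->].
have c_ge0 : 0 <= c := le_trans (ler0n _ _) (leX y yX).
apply: le_trans (_ : (#|G : 'C_G[y]|%g * #|G : 'C_G[w]|%g)%N%:R <= _).
  by rewrite ler_nat index_cent1M.
by rewrite natrM exprS ler_pM ?ler0n ?leX ?IH.
Qed.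

(* #|K : 'C_K[x]| is the size of the K-conjugacy class of x. *)
Definition small_class (R : numDomainType) (gT : finGroupType) (H K : {set gT}) (c : R) :=
  [set x in H | #|K : 'C_K[x]|%g%:R <= c].

Section SmallClass.
Variables (R : realFieldType) (gT : finGroupType) (H K : {group gT}) (c : R).
Local Notation X := (small_class H K c).

Lemma small_class_sub : X \subset H.
Proof. by apply/subsetP => x; rewrite inE => /andP[]. Qed.

Lemma small_class1 : 1 <= c -> 1%g \in X.
Proof. by rewrite inE group1 cent11T setIT indexgg. Qed.

Lemma small_classV : {in X, forall x, x^-1 \in X}%g.
Proof. by move=> x; rewrite !inE groupV cent1V. Qed.

Lemma card_cent1_notin_small_class x :
  0 < c -> x \in H -> x \notin X -> #|'C_K[x]%g|%:R <= #|K|%:R / c.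
Proof.
move=> c_gt0 Hx; rewrite inE Hx -ltNge => lt_c_idx.
rewrite ler_pdivlMr // -(Lagrange (subsetIl K 'C[x]%g)) natrM.
by rewrite ler_wpM2l ?ler0n ?ltW.
Qed.

Lemma sum_card_cent1_le : 0 < c ->
  \sum_(x in H) #|'C_K[x]%g|%:R <=
    #|H|%:R * (#|K|%:R / c) + #|X|%:R * (#|K|%:R - #|K|%:R / c).
Proof.
move=> c_gt0; set a := #|K|%:R / c; set b := #|K|%:R - a.
have le_a_b x : x \in H -> #|'C_K[x]%g|%:R <= a + (if x \in X then b else 0).
  move=> Hx; case: ifPn => [_ | /(card_cent1_notin_small_class c_gt0 Hx)].
    by rewrite addrC subrK ler_nat subset_leq_card ?subsetIl.
  by rewrite addr0.
apply: le_trans (ler_sum _ le_a_b) _.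
rewrite big_split /= sumr_const -big_mkcondr /= (eq_bigl (mem X)); last first.
  by move=> x /=; rewrite andb_idl // => /(subsetP small_class_sub).
by rewrite sumr_const !mulr_natl.
Qed.

End SmallClass.

Section CommutingProbability.
Variables (R : realType) (gT : finGroupType) (H K : {group gT}).

Lemma commprobE :
  commprob R H K = (\sum_(x in H) #|'C_K[x]%g|)%:R / (#|H| * #|K|)%:R.
Proof.
congr (_%:R / _); rewrite -(eq_bigr _ (fun x _ => sum1_card _)) pair_big_dep.
rewrite -sum1_card; apply: eq_bigl => -[x y] /=.
by rewrite in_set in_setX in_setI cent1E (eq_sym (y * x)%g) andbA.
Qed.

Lemma commprob_le1 : commprob R H K <= 1.
Proof.
rewrite commprobE ler_pdivrMr ?ltr0n ?muln_gt0 ?cardG_gt0 // mul1r ler_nat.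
rewrite -sum_nat_const; apply: leq_sum => x _.
exact/subset_leq_card/subsetIl.
Qed.

Lemma commprob_small_class (eps : R) : 0 < eps -> eps <= commprob R H K ->
  eps * #|H|%:R <= (2 - eps) * #|small_class H K (2 / eps)|%:R.
Proof.
move=> eps_gt0; rewrite commprobE ler_pdivlMr ?ltr0n ?muln_gt0 ?cardG_gt0 //.
have c_gt0 : 0 < 2 / eps by rewrite divr_gt0.
rewrite natr_sum => /le_trans/(_ (sum_card_cent1_le H K c_gt0)).
have k_gt0 : 0 < #|K|%:R :> R by rewrite ltr0n cardG_gt0.
rewrite natrM invf_div; nra.
Qed.

End CommutingProbability.

Theorem lemma2p8 (R : realType) (gT : finGroupType) (H K : {group gT}) (eps : R) :
  0 < eps -> eps <= commprob R H K ->
  exists X : {set gT},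
    [/\ X \subset H,
        ((#|H : <<X>>|)%g%:R <= 2 / eps - 1 :> R),
        (forall x, x \in X -> (#|K : 'C_K[x]|)%g%:R <= 2 / eps :> R)
      & (forall x, x \in <<X>>%g -> (#|K : 'C_K[x]|)%g%:R <= powR (2 / eps) (6 / eps) :> R)].
Proof.
move=> eps_gt0 le_eps; set c := 2 / eps; set X := small_class H K c.
have eps_le1 : eps <= 1 := le_trans le_eps (commprob_le1 R H K).
have c_ge1 : 1 <= c by rewrite ler_pdivlMr // mul1r; lra.
have X1 : 1%g \in X := small_class1 H K c_ge1.
have XH : X \subset H := small_class_sub H K c.
have X_gt0 : 0 < #|X|%:R :> R by rewrite ltr0n card_gt0; apply/set0Pn; exists 1%g.
have le_H_X : eps * #|H|%:R <= (2 - eps) * #|X|%:R.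
  exact: commprob_small_class.
exists X; split => //.
- rewrite lerBrDr ler_pdivlMr //.
  have := mul_indexg_card_gen XH; rewrite -(ler_nat R) natrM; nra.
- by move=> x; rewrite inE => /andP[].
move=> x /(mem_gen_expgs X1 (@small_classV _ _ H K c))[n xXn le_n].
apply: le_trans (index_cent1_expgs (c := c) _ xXn) _ => [y|].
  by rewrite inE => /andP[].
rewrite -powR_mulrn ?(le_trans ler01 c_ge1) // ler_powR // ler_pdivlMr //.
have le_gen_H : (#|<<X>>%g| <= #|H|)%N by rewrite subset_leq_card ?gen_subG.
move: le_n; rewrite -(ler_nat R) natrM; move: le_gen_H; rewrite -(ler_nat R) natrM.
nra.
Qed.
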